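(* Let $\mathcal{P}_1$ and $\mathcal{P}_2$ be nonempty convex sets (convex subsets of real vector spaces), and let $u_1, u_2 : \mathcal{P}_1 \times \mathcal{P}_2 \to \mathbb{R}$ be functions such that, for each $u \in \{u_1, u_2\}$, all $\sigma = (\sigma_1,\sigma_2), \tau = (\tau_1,\tau_2) \in \mathcal{P}_1 \times \mathcal{P}_2$ and all $\alpha, \beta \in [0,1]$, $$u\bigl(\alpha\sigma_1 + (1-\alpha)\tau_1,\ \beta\sigma_2 + (1-\beta)\tau_2\bigr) = \alpha\, u\bigl(\sigma_1,\ \beta\sigma_2 + (1-\beta)\tau_2\bigr) + (1-\alpha)\, u\bigl(\tau_1,\ \beta\sigma_2 + (1-\beta)\tau_2\bigr)$$ $$= \beta\, u\bigl(\alpha\sigma_1 + (1-\alpha)\tau_1,\ \sigma_2\bigr) + (1-\beta)\, u\bigl(\alpha\sigma_1 + (1-\alpha)\tau_1,\ \tau_2\bigr).$$ Then the following are equivalent: (a) for all $\sigma, \tau \in \mathcal{P}_1 \times \mathcal{P}_2$: $u_1(\sigma) \geq u_1(\tau)$ if and only if $u_2(\sigma) \leq u_2(\tau)$; (b) there exist $\alpha, \beta \in \mathbb{R}$ with $\alpha > 0$ such that $u_2(\sigma) = -\alpha\, u_1(\sigma) + \beta$ for all $\sigma \in \mathcal{P}_1 \times \mathcal{P}_2$; (c) there exist $\gamma, \delta \in \mathbb{R}$ with $\gamma > 0$ such that, setting $v_1 = \gamma u_1 + \delta$, one has $v_1(\sigma) + u_2(\sigma) = 0$ for all $\sigma \in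 \mathcal{P}_1 \times \mathcal{P}_2$.
   Context: A two-person game is a quadruple $\langle \mathcal{P}_1, \mathcal{P}_2, u_1, u_2\rangle$ of strategy sets and real-valued payoff functions on $\mathcal{P}_1\times\mathcal{P}_2$. Condition (a) says the game is adversarial (strictly competitive); the displayed identities say the game is bilinear (bi-affine); (c) says the game obtained by replacing $u_1$ with a positive affine transformation of it is zero-sum. A function $f$ is a positive affine transformation of $g$ if $f = a g + b$ for some reals $a > 0$, $b$. *)

From HB Require Import structures.
From mathcomp Require Import all_boot all_order all_algebra.
From mathcomp Require Import reals.
Set Implicit Arguments. Unset Strict Implicit. Unset Printing Implicit Defensive.
Import Order.TTheory GRing.Theory Num.Theory.
Local Open Scope ring_scope.

Definition convex_set (R : realType) (V : lmodType R) (P : V -> Prop) : Prop :=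
  forall x y : V, P x -> P y -> forall a : R, 0 <= a -> a <= 1 ->
    P (a *: x + (1 - a) *: y).

Definition bilinear_game (R : realType) (V1 V2 : lmodType R)
    (P1 : V1 -> Prop) (P2 : V2 -> Prop) (u : V1 -> V2 -> R) : Prop :=
  forall s1 t1 : V1, forall s2 t2 : V2,
    P1 s1 -> P1 t1 -> P2 s2 -> P2 t2 ->
  forall a b : R, 0 <= a -> a <= 1 -> 0 <= b -> b <= 1 ->
    u (a *: s1 + (1 - a) *: t1) (b *: s2 + (1 - b) *: t2)
      = a * u s1 (b *: s2 + (1 - b) *: t2) + (1 - a) * u t1 (b *: s2 + (1 - b) *: t2)
 /\ u (a *: s1 + (1 - a) *: t1) (b *: s2 + (1 - b) *: t2)
      = b * u (a *: s1 + (1 - a) *: t1) s2 + (1 - b) * u (a *: s1 + (1 - a) *: t1) t2.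

From HB Require Import structures.
From mathcomp Require Import all_boot all_order all_algebra.
From mathcomp Require Import reals boolp.
From mathcomp Require Import ring lra.
Import Order.TTheory GRing.Theory Num.Theory.
Set Implicit Arguments. Unset Strict Implicit. Unset Printing Implicit Defensive.
Local Open Scope ring_scope.

(* (b) <-> (c) and (b) -> (a) are immediate.  For (a) -> (b): by (a), u2 is
   constant on the level sets of u1.  If u1 is constant, so is u2.  Otherwise,
   up to swapping the players, u1 takes two values A < B at (s1,s2) and (t1,s2),
   and there are alpha > 0 and beta such that h := u2 + alpha u1 - beta vanishes
   at both points.  Then h is bi-affine, constant on the level sets of u1, and
   must vanish everywhere: an affine function on a convex set that vanishes
   wherever f is close to f x vanishes identically (pull any point towards x),
   and applying this along the row through s2, along columns through points
   between s1 and t1, and finally along arbitrary rows, spreads the zeros of h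
   over all of P1 x P2. *)

Lemma convex_comb_near {R : realType} {A B v a k : R} : A != B ->
  k <= a -> a <= 1 - k -> `|v - (a * A + (1 - a) * B)| <= k * `|A - B| ->
  exists2 a', 0 <= a' <= 1 & v = a' * A + (1 - a') * B.
Proof.
move=> neqAB ka ak hv; have AB0 : A - B != 0 by rewrite subr_eq0.
exists ((v - B) / (A - B)); last by field.
have E : v - (a * A + (1 - a) * B) = ((v - B) / (A - B) - a) * (A - B) by field.
move: hv; rewrite E normrM ler_pM2r ?normr_gt0 // ler_norml => /andP[lo hi].
apply/andP; split; lra.
Qed.

Definition affine_on {R : realType} {W : lmodType R} (P : W -> Prop) (f : W -> R) :=
  forall x y, P x -> P y -> forall a : R, 0 <= a -> a <= 1 ->
    f (a *: x + (1 - a) *: y) = a * f x + (1 - a) * f y.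

Section AffineOnConvex.
Variables (R : realType) (W : lmodType R) (P : W -> Prop).
Hypothesis convexP : convex_set P.

(* At [c *: w + (1 - c) *: x] with [c = d / (d + |f w - f x|)], [f] is within
   [d] of [f x], and [h] equals [c * h w]. *)
Lemma affine_on_zero_near (f h : W -> R) x (d : R) :
  affine_on P f -> affine_on P h -> P x -> h x = 0 -> 0 < d ->
  (forall m, P m -> `|f m - f x| <= d -> h m = 0) -> forall w, P w -> h w = 0.
Proof.
move=> aff afh Px hx d0 near0 w Pw.
pose e := `|f w - f x|; pose c := d / (d + e).
have e0 : 0 <= e by exact: normr_ge0.
have de0 : 0 < d + e by lra.
have c0 : 0 < c by rewrite divr_gt0.
have c1 : c <= 1 by rewrite ler_pdivrMr // mul1r; lra.
have Pm := convexP Pw Px (ltW c0) c1.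
have fm : `|f (c *: w + (1 - c) *: x) - f x| <= d.
  rewrite aff ?(ltW c0) // (_ : _ - _ = c * (f w - f x)); last by ring.
  by rewrite normrM gtr0_norm // -/e /c mulrAC ler_pdivrMr //; nra.
have /eqP := near0 _ Pm fm.
by rewrite afh ?(ltW c0) // hx mulr0 addr0 mulf_eq0 gt_eqF //= => /eqP.
Qed.

Lemma affine_on_zero_of_levels (f h : W -> R) x y :
  affine_on P f -> affine_on P h -> P x -> P y -> h x = 0 -> h y = 0 ->
  f x != f y -> (forall p m, P p -> P m -> f p = f m -> h p = h m) ->
  forall w, P w -> h w = 0.
Proof.
move=> aff afh Px Py hx hy fxy levels.
have half0 : (0 : R) <= 1 / 2 by lra.
have half1 : (1 / 2 : R) <= 1 by lra.
apply: (@affine_on_zero_near f h (1/2 *: x + (1 - 1/2) *: y) (1/4 * `|f x - f y|)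
          aff afh).
- by apply: convexP.
- by rewrite afh // hx hy; ring.
- by rewrite mulr_gt0 ?normr_gt0 ?subr_eq0 //; lra.
move=> m Pm; rewrite aff // => near.
have [||a' /andP[a0 a1] fm] := convex_comb_near fxy _ _ near; [lra | lra |].
have Pq := convexP Px Py a0 a1.
by rewrite -(levels _ _ Pq Pm) ?afh ?aff ?hx ?hy //; ring.
Qed.

End AffineOnConvex.

Section BilinearGame.
Variables (R : realType) (V1 V2 : lmodType R) (P1 : V1 -> Prop) (P2 : V2 -> Prop).
Implicit Types u v h : V1 -> V2 -> R.

Lemma bilinear_game_affine_l u : bilinear_game P1 P2 u ->
  forall q, P2 q -> affine_on P1 (u^~ q).
Proof.
move=> bu q Pq x y Px Py a a0 a1.
have [] := bu x y q q Px Py Pq Pq a 1 a0 a1 ler01 (lexx 1).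
by rewrite subrr scale0r addr0 scale1r.
Qed.

Lemma bilinear_game_affine_r u : bilinear_game P1 P2 u ->
  forall p, P1 p -> affine_on P2 (u p).
Proof.
move=> bu p Pp x y Px Py a a0 a1.
have [_] := bu p p x y Pp Pp Px Py 1 a ler01 (lexx 1) a0 a1.
by rewrite subrr scale0r addr0 scale1r.
Qed.

Lemma bilinear_game_swap u : bilinear_game P1 P2 u ->
  bilinear_game P2 P1 (fun q p => u p q).
Proof.
move=> bu x2 y2 x1 y1 Px2 Py2 Px1 Py1 a b a0 a1 b0 b1.
by have [E1 E2] := bu x1 y1 x2 y2 Px1 Py1 Px2 Py2 b a b0 b1 a0 a1.
Qed.

Lemma bilinear_game_comb u v (a c : R) :
  bilinear_game P1 P2 u -> bilinear_game P1 P2 v ->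
  bilinear_game P1 P2 (fun p q => u p q + a * v p q - c).
Proof.
move=> bu bv x1 y1 x2 y2 Px1 Py1 Px2 Py2 s t s0 s1 t0 t1.
have [Eu1 Eu2] := bu x1 y1 x2 y2 Px1 Py1 Px2 Py2 s t s0 s1 t0 t1.
have [Ev1 Ev2] := bv x1 y1 x2 y2 Px1 Py1 Px2 Py2 s t s0 s1 t0 t1.
by split; [rewrite Eu1 Ev1 | rewrite Eu2 Ev2]; ring.
Qed.

Definition reverses_order (u1 u2 : V1 -> V2 -> R) :=
  forall s1 s2 t1 t2, P1 s1 -> P2 s2 -> P1 t1 -> P2 t2 ->
    (u1 s1 s2 >= u1 t1 t2 <-> u2 s1 s2 <= u2 t1 t2).

Definition neg_affine_transform (u1 u2 : V1 -> V2 -> R) :=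
  exists alpha beta : R, 0 < alpha /\
    forall s1 s2, P1 s1 -> P2 s2 -> u2 s1 s2 = - alpha * u1 s1 s2 + beta.

Definition level_compatible u h :=
  forall p1 p2 q1 q2, P1 p1 -> P2 p2 -> P1 q1 -> P2 q2 ->
    u p1 p2 = u q1 q2 -> h p1 p2 = h q1 q2.

Lemma reverses_order_level (u1 u2 : V1 -> V2 -> R) :
  reverses_order u1 u2 -> level_compatible u1 u2.
Proof.
move=> ro p1 p2 q1 q2 Pp1 Pp2 Pq1 Pq2 E; apply/le_anti/andP; split.
  by apply/(ro _ _ _ _ Pp1 Pp2 Pq1 Pq2).1; rewrite E.
by apply/(ro _ _ _ _ Pq1 Pq2 Pp1 Pp2).1; rewrite E.
Qed.

Lemma reverses_order_lt (u1 u2 : V1 -> V2 -> R) : reverses_order u1 u2 ->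
  forall p1 p2 q1 q2, P1 p1 -> P2 p2 -> P1 q1 -> P2 q2 ->
    u1 p1 p2 < u1 q1 q2 -> u2 q1 q2 < u2 p1 p2.
Proof.
move=> ro p1 p2 q1 q2 Pp1 Pp2 Pq1 Pq2 lt1; rewrite lt_neqAle.
rewrite (ro _ _ _ _ Pq1 Pq2 Pp1 Pp2).1 ?ltW // andbT.
apply/eqP => E; move: lt1; rewrite ltNge.
by rewrite (ro _ _ _ _ Pp1 Pp2 Pq1 Pq2).2 ?E.
Qed.

Lemma level_compatible_comb u h (a c : R) : level_compatible u h ->
  level_compatible u (fun p q => h p q + a * u p q - c).
Proof.
move=> hlev p1 p2 q1 q2 Pp1 Pp2 Pq1 Pq2 E.
by rewrite (hlev _ _ _ _ Pp1 Pp2 Pq1 Pq2 E) E.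
Qed.

End BilinearGame.

Section Vanishing.
Variables (R : realType) (V1 V2 : lmodType R) (P1 : V1 -> Prop) (P2 : V2 -> Prop).
Hypotheses (convexP1 : convex_set P1) (convexP2 : convex_set P2).
Variables (u h : V1 -> V2 -> R) (s1 t1 : V1) (s2 : V2).
Hypotheses (bu : bilinear_game P1 P2 u) (bh : bilinear_game P1 P2 h).
Hypothesis hlev : level_compatible P1 P2 u h.
Hypotheses (Ps1 : P1 s1) (Pt1 : P1 t1) (Ps2 : P2 s2).
Hypotheses (hs : h s1 s2 = 0) (ht : h t1 s2 = 0) (ust : u s1 s2 != u t1 s2).

Let aff_u := bilinear_game_affine_l bu.
Let aff_h := bilinear_game_affine_l bh.

Lemma level_compatible_row_eq0 r1 : P1 r1 -> h r1 s2 = 0.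
Proof.
apply: (affine_on_zero_of_levels convexP1 (aff_u Ps2) (aff_h Ps2) Ps1 Pt1) => //.
by move=> p m Pp Pm; apply: hlev.
Qed.

Lemma level_compatible_column_eq0 a q : 1/6 <= a -> a <= 5/6 -> P2 q ->
  h (a *: s1 + (1 - a) *: t1) q = 0.
Proof.
move=> a_lo a_hi; set p := a *: s1 + _.
have Pp : P1 p by apply: convexP1 => //; lra.
apply: (@affine_on_zero_near _ _ _ convexP2 (u p) (h p) s2
          (1/6 * `|u s1 s2 - u t1 s2|)
          (bilinear_game_affine_r bu Pp) (bilinear_game_affine_r bh Pp) Ps2).
- by rewrite aff_h ?hs ?ht //; [ring | lra | lra].
- by rewrite mulr_gt0 ?normr_gt0 ?subr_eq0 //; lra.
move=> m Pm; rewrite (aff_u Ps2 Ps1 Pt1); [move=> near | lra | lra].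
have [||a' /andP[a0 a1] fm] := convex_comb_near ust _ _ near; [lra | lra |].
have Pq := convexP1 Ps1 Pt1 a0 a1.
have E : u (a' *: s1 + (1 - a') *: t1) s2 = u p m by rewrite aff_u.
by rewrite -(hlev Pq Ps2 Pp Pm E) aff_h // hs ht; ring.
Qed.

Lemma level_compatible_eq0 r1 r2 : P1 r1 -> P2 r2 -> h r1 r2 = 0.
Proof.
move=> Pr1 Pr2.
pose m1 := 1/2 *: s1 + (1 - 1/2) *: t1; pose n1 := 1/3 *: s1 + (1 - 1/3) *: t1.
have Pm1 : P1 m1 by apply: convexP1 => //; lra.
have Pn1 : P1 n1 by apply: convexP1 => //; lra.
pose q b := b *: s2 + (1 - b) *: r2.
have gap_s2 : u m1 s2 - u n1 s2 = 1/6 * (u s1 s2 - u t1 s2).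
  by rewrite !aff_u //; try lra; ring.
have gap_q b : 0 <= b -> b <= 1 -> u m1 (q b) - u n1 (q b)
    = b * (u m1 s2 - u n1 s2) + (1 - b) * (u m1 r2 - u n1 r2).
  by move=> b0 b1; rewrite !(bilinear_game_affine_r bu) //; ring.
(* On such a row [h] vanishes at [m1] and [n1], hence everywhere, and
   [h r1 (q b) = (1 - b) * h r1 r2]. *)
have from_row b : 0 <= b -> b < 1 -> u m1 (q b) != u n1 (q b) -> h r1 r2 = 0.
  move=> b0 b1 neq; have Pq : P2 (q b) by apply: convexP2 => //; lra.
  have hq : h r1 (q b) = 0.
    apply: (affine_on_zero_of_levels convexP1 (aff_u Pq) (aff_h Pq) Pm1 Pn1) => //.
    - by apply: level_compatible_column_eq0 => //; lra.
    - by apply: level_compatible_column_eq0 => //; lra.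
    by move=> p p' Pp Pp'; apply: hlev.
  move: hq; rewrite (bilinear_game_affine_r bh Pr1 Ps2 Pr2) //; last lra.
  rewrite level_compatible_row_eq0 // mulr0 add0r => /eqP.
  by rewrite mulf_eq0 => /orP[/eqP|/eqP //]; lra.
(* The gap [u m1 (q b) - u n1 (q b)] is affine in [b] and nonzero at [b = 1],
   so it cannot vanish at both [b = 1/2] and [b = 3/4]. *)
have [E|E] := eqVneq (u m1 (q (1/2))) (u n1 (q (1/2))); last first.
  by apply: (from_row (1/2)); lra.
apply: (from_row (3/4)); [lra | lra | apply/eqP => F].
move/eqP: E; rewrite -subr_eq0 gap_q; [move=> /eqP E | lra | lra].
move/eqP: F; rewrite -subr_eq0 gap_q; [move=> /eqP F | lra | lra].
by move/eqP: ust; apply; lra.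
Qed.

End Vanishing.

Section OrderReversal.
Variables (R : realType) (V1 V2 : lmodType R) (P1 : V1 -> Prop) (P2 : V2 -> Prop).
Hypotheses (convexP1 : convex_set P1) (convexP2 : convex_set P2).
Variables (u1 u2 : V1 -> V2 -> R).
Hypotheses (bu1 : bilinear_game P1 P2 u1) (bu2 : bilinear_game P1 P2 u2).
Hypothesis ro : reverses_order P1 P2 u1 u2.

Lemma reverses_order_neg_affine_of_row s1 t1 s2 : P1 s1 -> P1 t1 -> P2 s2 ->
  u1 s1 s2 != u1 t1 s2 -> neg_affine_transform P1 P2 u1 u2.
Proof.
wlog lt_st : s1 t1 / u1 s1 s2 < u1 t1 s2.
  move=> wlog Ps1 Pt1 Ps2 neq.
  have [lt_st|lt_ts|eq_st] := ltgtP (u1 s1 s2) (u1 t1 s2).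
  - exact: (wlog s1 t1).
  - by apply: (wlog t1 s1); rewrite // eq_sym.
  - by rewrite eq_st eqxx in neq.
move=> Ps1 Pt1 Ps2 neq.
pose alpha := (u2 s1 s2 - u2 t1 s2) / (u1 t1 s2 - u1 s1 s2).
pose beta := u2 s1 s2 + alpha * u1 s1 s2.
have alpha_gt0 : 0 < alpha.
  by rewrite divr_gt0 // subr_gt0 // (reverses_order_lt ro Ps1 Ps2 Pt1 Ps2).
have hs : u2 s1 s2 + alpha * u1 s1 s2 - beta = 0 by rewrite /beta; ring.
have ht : u2 t1 s2 + alpha * u1 t1 s2 - beta = 0.
  by rewrite /beta /alpha; field; rewrite subr_eq0 gt_eqF.
exists alpha, beta; split=> // r1 r2 Pr1 Pr2.
have /= h0 := level_compatible_eq0 convexP1 convexP2 bu1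
  (bilinear_game_comb alpha beta bu2 bu1)
  (level_compatible_comb alpha beta (reverses_order_level ro))
  Ps1 Pt1 Ps2 hs ht neq Pr1 Pr2.
have -> : u2 r1 r2 = (u2 r1 r2 + alpha * u1 r1 r2 - beta) - alpha * u1 r1 r2 + beta.
  by ring.
by rewrite h0; ring.
Qed.
End OrderReversal.

Lemma reverses_order_neg_affine (R : realType) (V1 V2 : lmodType R)
    (P1 : V1 -> Prop) (P2 : V2 -> Prop) (u1 u2 : V1 -> V2 -> R) :
  (exists x, P1 x) -> (exists y, P2 y) -> convex_set P1 -> convex_set P2 ->
  bilinear_game P1 P2 u1 -> bilinear_game P1 P2 u2 ->
  reverses_order P1 P2 u1 u2 -> neg_affine_transform P1 P2 u1 u2.
Proof.
move=> [x0 Px0] [y0 Py0] cP1 cP2 bu1 bu2 ro.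
have [[s1 [t1 [s2 [Ps1 Pt1 Ps2 neq]]]]|row_const] :=
  pselect (exists s1 t1 s2, [/\ P1 s1, P1 t1, P2 s2 & u1 s1 s2 != u1 t1 s2]).
  exact: (reverses_order_neg_affine_of_row cP1 cP2 bu1 bu2 ro Ps1 Pt1 Ps2 neq).
have [[s2 [t2 [s1 [Ps2 Pt2 Ps1 neq]]]]|col_const] :=
  pselect (exists s2 t2 s1, [/\ P2 s2, P2 t2, P1 s1 & u1 s1 s2 != u1 s1 t2]).
  have ro' : reverses_order P2 P1 (fun q p => u1 p q) (fun q p => u2 p q).
    by move=> ? ? ? ? ? ? ? ?; apply: ro.
  have [alpha [beta [alpha_gt0 E]]] := reverses_order_neg_affine_of_row cP2 cP1
    (bilinear_game_swap bu1) (bilinear_game_swap bu2) ro' Ps2 Pt2 Ps1 neq.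
  by exists alpha, beta; split=> // r1 r2 Pr1 Pr2; apply: E.
have u1_const s1 s2 : P1 s1 -> P2 s2 -> u1 s1 s2 = u1 x0 y0.
  move=> Ps1 Ps2; transitivity (u1 x0 s2); apply/eqP; apply: contraT => neq.
    by case: row_const; exists s1, x0, s2.
  by case: col_const; exists s2, y0, x0.
exists 1, (u2 x0 y0 + u1 x0 y0); split=> // s1 s2 Ps1 Ps2.
by rewrite (reverses_order_level ro Ps1 Ps2 Px0 Py0) ?u1_const //; ring.
Qed.

Lemma neg_affine_reverses_order (R : realType) (V1 V2 : lmodType R)
    (P1 : V1 -> Prop) (P2 : V2 -> Prop) (u1 u2 : V1 -> V2 -> R) :
  neg_affine_transform P1 P2 u1 u2 -> reverses_order P1 P2 u1 u2.
Proof.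
move=> [alpha [beta [alpha_gt0 E]]] s1 s2 t1 t2 Ps1 Ps2 Pt1 Pt2.
by rewrite !E // lerD2r !mulNr lerN2 ler_pM2l.
Qed.

Theorem theorem2 (R : realType) (V1 V2 : lmodType R)
    (P1 : V1 -> Prop) (P2 : V2 -> Prop) (u1 u2 : V1 -> V2 -> R) :
  (exists x, P1 x) -> (exists y, P2 y) ->
  convex_set P1 -> convex_set P2 ->
  bilinear_game P1 P2 u1 -> bilinear_game P1 P2 u2 ->
  let A := forall s1 s2 t1 t2, P1 s1 -> P2 s2 -> P1 t1 -> P2 t2 ->
             (u1 s1 s2 >= u1 t1 t2 <-> u2 s1 s2 <= u2 t1 t2) in
  let B := exists alpha beta : R, 0 < alpha /\
             forall s1 s2, P1 s1 -> P2 s2 -> u2 s1 s2 = - alpha * u1 s1 s2 + beta in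
  let C := exists gamma delta : R, 0 < gamma /\
             forall s1 s2, P1 s1 -> P2 s2 -> (gamma * u1 s1 s2 + delta) + u2 s1 s2 = 0 in
  (A <-> B) /\ (B <-> C).
Proof.
move=> nP1 nP2 cP1 cP2 bu1 bu2 A B C; split.
  split; [exact: reverses_order_neg_affine | exact: neg_affine_reverses_order].
split=> -[g [d [g_gt0 E]]]; exists g, (- d); split=> // s1 s2 Ps1 Ps2.
  by rewrite E //; ring.
by move/eqP: (E s1 s2 Ps1 Ps2); rewrite addrC addr_eq0 => /eqP ->; ring.
Qed.
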